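(* Let $B$ be a finite-dimensional abelian Lie algebra over a field $\mathbb{K}$ of characteristic zero and let $w\colon B\times B\to B^*$ be a cyclic $2$-cocycle. Then $(T^*_wB)^2=\mathrm{span}\langle w(b,b'):b,b'\in B\rangle$ and $Z(T^*_wB)=\mathrm{rad}\,w\oplus B^*$. Hence $T^*_wB$ is $2$-step nilpotent if and only if $w\neq0$. Moreover the following are equivalent: (a) $(T^*_wB,q_B)$ is reduced; (b) $w$ is non-degenerate; (c) $B^*=\mathrm{span}\langle w(b,b'):b,b'\in B\rangle$.
   Context: For a bilinear map $w\colon B\times B\to B^*$: $\mathrm{rad}\,w=\{b\in B:w(b,\cdot)=0\}$ and $w$ is non-degenerate if $\mathrm{rad}\,w=0$; $w$ is cyclic if $w(a,b)(c)=w(c,a)(b)=w(b,c)(a)$; $w$ is a $2$-cocycle (coadjoint coefficients) if $w$ is skew-symmetric and $\sum_{\mathrm{cyc}}w([a,b],c)=\sum_{\mathrm{cyc}}\mathrm{ad}^*(a)w(b,c)$, $\mathrm{ad}^*(a)(\beta)(a')=-\beta([a,a'])$. The $T^*$-extension $T^*_wB$ is $B\oplus B^*$ with bracket $[b+\beta,b'+\beta']=[b,b']_B+w(b,b')+\mathrm{ad}^*(b)(\beta')-\mathrm{ad}^*(b')(\beta)$ (here, $B$ abelian, simply $w(b,b')$) and form $q_B(b+\beta,b'+\beta')=\beta(b')+\beta'(b)$. A Lie algebra $L$ is reduced if $Z(L)\subseteq[L,L]$; $2$-step nilpotent means $[L,[L,L]]=0\ne[L,L]$. *)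

From HB Require Import structures.
From mathcomp Require Import all_boot all_order all_algebra.
Set Implicit Arguments. Unset Strict Implicit. Unset Printing Implicit Defensive.
Import GRing.Theory.
Local Open Scope ring_scope.

Notation dual K B := ('Hom(B, K^o)) (only parsing).

Section TStar.
Variables (K : fieldType) (B : vectType K).

Definition adstar (br : B -> B -> B) (a : B) (beta : 'Hom(B, K^o)) : 'Hom(B, K^o) :=
  linfun (fun a' : B => - beta (br a a')).

Definition abel_br : B -> B -> B := fun _ _ => 0.

Definition bilinear_map (w : B -> B -> 'Hom(B, K^o)) :=
  (forall (k : K) a a' b, w (k *: a + a') b = k *: w a b + w a' b) /\
  (forall (k : K) a b b', w a (k *: b + b') = k *: w a b + w a b').

Definition rad_w (w : B -> B -> 'Hom(B, K^o)) (b : B) : Prop :=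
  forall b', w b b' = 0.

Definition nondeg_w (w : B -> B -> 'Hom(B, K^o)) : Prop :=
  forall b, rad_w w b -> b = 0.

Definition cyclic_form (w : B -> B -> 'Hom(B, K^o)) : Prop :=
  forall a b c, w a b c = w c a b /\ w c a b = w b c a.

Definition cocycle2 (br : B -> B -> B) (w : B -> B -> 'Hom(B, K^o)) : Prop :=
  (forall a b, w a b = - w b a) /\
  (forall a b c,
     w (br a b) c + w (br b c) a + w (br c a) b =
     adstar br a (w b c) + adstar br b (w c a) + adstar br c (w a b)).

Definition tstar_br (br : B -> B -> B) (w : B -> B -> 'Hom(B, K^o))
  (x y : (B * 'Hom(B, K^o))%type) : (B * 'Hom(B, K^o))%type :=
  (br x.1 y.1, w x.1 y.1 + adstar br x.1 y.2 - adstar br y.1 x.2).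

Definition qB (x y : (B * 'Hom(B, K^o))%type) : K := x.2 y.1 + y.2 x.1.

End TStar.

Definition in_span (K : fieldType) (V : vectType K) (S : V -> Prop) (x : V) : Prop :=
  exists s : seq V, (forall y, y \in s -> S y) /\ x \in <<s>>%VS.

Section LieNotions.
Variables (K : fieldType) (L : vectType K) (br : L -> L -> L).

Definition lie_derived (x : L) : Prop := in_span (fun z => exists u v, z = br u v) x.

Definition lie_center (x : L) : Prop := forall y, br x y = 0.

Definition lie_reduced : Prop := forall x, lie_center x -> lie_derived x.

Definition two_step_nilpotent : Prop :=
  (forall x, in_span (fun z => exists u v, z = br u v /\ lie_derived v) x -> x = 0)
  /\ exists x, lie_derived x /\ x <> 0.
End LieNotions.

From HB Require Import structures.
From mathcomp Require Import all_boot all_order all_algebra.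
Import GRing.Theory.
Local Open Scope ring_scope.
Set Implicit Arguments. Unset Strict Implicit.

(* For abelian B all coadjoint terms vanish, so the bracket of T^*_w B is
   [(b, β), (b', β')] = (0, w(b, b')).  Hence the derived algebra is
   0 ⊕ span w(B, B), the centre is rad w ⊕ B^*, and [L, [L, L]] = 0.
   Cyclicity gives w(c, b)(b') = w(b, b')(c), so rad w is the common kernel of
   the functionals w(b, b'); in finite dimension a family of functionals spans
   B^* exactly when its common kernel is trivial, which gives (b) <-> (c), and
   (a) <-> (b) follows from the descriptions of the centre and derived algebra. *)

Section Span.
Variables (K : fieldType) (V : vectType K).
Implicit Types (S T : V -> Prop) (x : V).

Lemma in_span1 S x : S x -> in_span S x.
Proof.
by move=> Sx; exists [:: x]; split=> [y /[!inE]/eqP-> //|]; exact: memv_span1.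
Qed.

Lemma in_span_sub S T x : (forall y, S y -> T y) -> in_span S x -> in_span T x.
Proof. by move=> ST [s [sS xs]]; exists s; split=> // y /sS/ST. Qed.

Lemma in_span_neq0 S x : in_span S x -> x != 0 -> exists2 y, S y & y != 0.
Proof.
case=> s [sS xs] x0.
have [/hasP[y ys y0] | /hasPn s0] := boolP (has (predC1 0) s).
  by exists y; first exact: sS.
case/negP: x0; rewrite -memv0; apply: subvP xs; apply/span_subvP => y /s0.
by rewrite negbK memv0.
Qed.

Lemma in_span_eq0 S x : (forall y, S y -> y = 0) -> in_span S x -> x = 0.
Proof.
move=> S0 /in_span_neq0 S_neq0; apply/eqP; apply: contraT => /S_neq0[y /S0->].
by rewrite eqxx.
Qed.

Lemma in_span_linear (W : vectType K) (f : {linear V -> W}) S x :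
  in_span S x -> in_span (fun z => exists2 y, S y & z = f y) (f x).
Proof.
case=> s [sS xs]; exists (map f s); split.
  by move=> _ /mapP[y ys ->]; exists y; first exact: sS.
by rewrite -(eq_map (lfunE f)) -limg_span -[f x]lfunE memv_img.
Qed.

End Span.

Section PairSpan.
Variables (K : fieldType) (U V : vectType K).

Definition pair0 (v : V) : U * V := (0, v).

Fact pair0_is_linear : linear pair0.
Proof. by move=> k x y; rewrite /pair0 -[0 in LHS](addr0 0) -{1}(scaler0 U k). Qed.

HB.instance Definition _ :=
  GRing.isLinear.Build K V (U * V)%type *:%R pair0 pair0_is_linear.

Lemma in_span_pair0 (S : V -> Prop) (x : U * V) :
  in_span (fun z => z.1 = 0 /\ S z.2) x <-> x.1 = 0 /\ in_span S x.2.
Proof.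
split=> [xS | [x1 xS]].
  split.
    by apply: (in_span_eq0 _ (in_span_linear fst xS)) => _ [z [z1 _] ->].
  by apply: in_span_sub (in_span_linear snd xS) => _ [z [_ Sz] ->].
have -> : x = pair0 x.2 by case: x x1 {xS} => a b /= ->.
by apply: in_span_sub (in_span_linear pair0 xS) => _ [z Sz ->].
Qed.

End PairSpan.

Section Dual.
Variables (K : fieldType) (B : vectType K).
Implicit Types (b : B) (beta : 'Hom(B, K^o)) (s : seq 'Hom(B, K^o)).

Lemma dual_separates b : b != 0 -> exists beta : 'Hom(B, K^o), beta b != 0.
Proof.
move=> nz_b; pose e := vbasis (fullv : {vspace B}).
have [i coord_i | coord0] := pickP (fun i => coord e i b != 0).
  by exists (linfun (coord e i : B -> K^o)); rewrite lfunE.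
case/negP: nz_b; rewrite (coord_vbasis (memvf b)); apply/eqP; apply: big1 => i _.
by move/negbFE/eqP: (coord0 i) => ->; rewrite scale0r.
Qed.

Lemma span_vanishing s beta b :
  {in s, forall y : 'Hom(B, K^o), y b = 0} -> beta \in <<s>>%VS -> beta b = 0.
Proof.
move=> s0 /(@coord_span _ _ _ (in_tuple s))->; rewrite sum_lfunE.
by apply: big1 => i _; rewrite scale_lfunE s0 ?scaler0 ?mem_nth.
Qed.

Lemma in_span_separates (S : 'Hom(B, K^o) -> Prop) :
  (forall beta, in_span S beta) ->
  forall b, (forall y, S y -> y b = 0) -> b = 0.
Proof.
move=> Sfull b S0; apply/eqP; apply: contraT => /dual_separates[beta].
have [s [sS beta_s]] := Sfull beta.
by rewrite (span_vanishing _ beta_s) ?eqxx // => y /sS/S0.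
Qed.

Section Evaluation.
Variable s : seq 'Hom(B, K^o).

Definition eval_row b : 'rV[K]_(size s) := \row_(j < size s) s`_j b.

Fact eval_row_is_linear : linear eval_row.
Proof. by move=> k x y; apply/rowP => j; rewrite !mxE linearP. Qed.

HB.instance Definition _ :=
  GRing.isLinear.Build K B 'rV[K]_(size s) *:%R eval_row eval_row_is_linear.

(* Separation makes evaluation at s injective, so every functional factors
   through it and is a combination of the coordinate functionals, i.e. of s. *)
Lemma span_separating :
  (forall b, {in s, forall y : 'Hom(B, K^o), y b = 0} -> b = 0) ->
  forall beta, beta \in <<s>>%VS.
Proof.
move=> sep beta; pose f := linfun eval_row.
have f_inj : lker f == 0%VS.
  apply/lker0P => x y; rewrite !lfunE /= => exy; apply/eqP; rewrite -subr_eq0.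
  apply/eqP/sep => t ts; rewrite linearB /=; apply/eqP; rewrite subr_eq0.
  have /rowP/(_ (Ordinal (etrans (index_mem t s) ts))) := exy.
  by rewrite !mxE nth_index // => ->.
pose h := (beta \o f^-1)%VF.
have -> : beta = \sum_(j < size s) h (delta_mx 0 j) *: s`_j.
  apply/lfunP => b; rewrite sum_lfunE -[b in LHS](lker0_lfunK f_inj).
  rewrite -comp_lfunE -/h [f b]lfunE /= (row_sum_delta (eval_row b)) linear_sum.
  by apply: eq_bigr => j _; rewrite linearZ scale_lfunE mxE; exact: mulrC.
apply: rpred_sum => j _; apply: rpredZ; exact/memv_span/mem_nth.
Qed.

End Evaluation.
End Dual.

Lemma vbasis_linear_eq0 (K : fieldType) (B : vectType K) (V : lmodType K)
    (f : B -> V) :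
  linear f -> (forall i : 'I_(\dim {:B}), f (vbasis fullv)`_i = 0) ->
  forall x, f x = 0.
Proof.
move=> f_lin f_basis x.
pose g : {linear B -> V} := HB.pack f (GRing.isLinear.Build K B V *:%R f f_lin).
change (g x = 0); rewrite (coord_vbasis (memvf x)) linear_sum big1 // => i _.
by rewrite linearZ /= f_basis scaler0.
Qed.

Section TStarAbelian.
Variables (K : fieldType) (B : vectType K) (w : B -> B -> 'Hom(B, K^o)).

Local Notation br := (tstar_br (@abel_br K B) w).
Local Notation W := (fun beta : 'Hom(B, K^o) => exists b b', beta = w b b').

Lemma adstar_abel a (beta : 'Hom(B, K^o)) : adstar (@abel_br K B) a beta = 0.
Proof.
by rewrite /adstar /abel_br linear0 oppr0; apply/lfunP => v; rewrite zero_lfunE.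
Qed.

Lemma tstar_abel_brE x y : br x y = (0, w x.1 y.1).
Proof. by rewrite /tstar_br !adstar_abel addr0 subr0. Qed.

Lemma tstar_abel_derived x : lie_derived br x <-> x.1 = 0 /\ in_span W x.2.
Proof.
apply: iff_trans (in_span_pair0 _ _); split; apply: in_span_sub => z.
  by case=> u [v ->]; rewrite tstar_abel_brE; split=> //; exists u.1, v.1.
case=> z1 [b [b' z2]]; exists (b, 0), (b', 0).
by rewrite tstar_abel_brE -z1 -z2 -surjective_pairing.
Qed.

Lemma tstar_abel_center x : lie_center br x <-> rad_w w x.1.
Proof.
split=> [xc b | xrad y]; last by rewrite tstar_abel_brE xrad.
by have /(congr1 snd) := xc (b, 0); rewrite tstar_abel_brE.
Qed.

Hypothesis w_bilinear : bilinear_map w.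
Hypothesis w_cyclic : cyclic_form w.

Lemma w_linear a : linear (w a).
Proof. by move=> k b b'; exact: w_bilinear.2. Qed.

Lemma w0r a : w a 0 = 0.
Proof.
have := w_linear a 1 0 0; rewrite scaler0 addr0 scale1r => w0.
by apply: (addIr (w a 0)); rewrite add0r -w0.
Qed.

Lemma tstar_abel_two_step : two_step_nilpotent br <-> exists b b', w b b' <> 0.
Proof.
split=> [[_ [x [/tstar_abel_derived[x1 x2] x0]]] | [b [b' wbb']]].
  have x2_neq0 : x.2 != 0.
    by apply/eqP => x2_0; apply: x0; case: x x1 x2_0 {x2} => ? ? /= -> ->.
  have [_ [b [b' ->]] wbb'] := in_span_neq0 x2 x2_neq0.
  by exists b, b'; apply/eqP.
split=> [x | ].
  apply: in_span_eq0 => _ [u [v [-> /tstar_abel_derived[v1 _]]]].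
  by rewrite tstar_abel_brE v1 w0r.
exists (br (b, 0) (b', 0)); split.
  by apply: in_span1; exists (b, 0), (b', 0).
by rewrite tstar_abel_brE => /(congr1 snd).
Qed.

Lemma rad_wE b : rad_w w b <-> forall beta, W beta -> beta b = 0.
Proof.
split=> [brad _ [x [x' ->]] | Wb0 x].
  by rewrite (w_cyclic x x' b).1 brad zero_lfunE.
apply/lfunP => x'; rewrite zero_lfunE -(w_cyclic x x' b).1.
by apply: Wb0; exists x, x'.
Qed.

Lemma rad_w_vbasis b :
  (forall i j : 'I_(\dim {:B}), w b (vbasis fullv)`_i (vbasis fullv)`_j = 0) ->
  rad_w w b.
Proof.
move=> wb0; apply: vbasis_linear_eq0 (w_linear b) _ => i.
apply/lfunP => x; rewrite zero_lfunE; apply: vbasis_linear_eq0 x => // k u v.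
exact: linearP.
Qed.

Lemma nondeg_wE : nondeg_w w <-> forall beta, in_span W beta.
Proof.
split=> [nd beta | Wfull b /rad_wE]; last exact: in_span_separates Wfull b.
pose e := vbasis (fullv : {vspace B}).
pose s := [seq w x y | x <- (e : seq B), y <- (e : seq B)].
exists s; split; first by move=> _ /allpairsP[[x y] [_ _ ->]]; exists x, y.
apply: span_separating => b s0; apply/nd/rad_w_vbasis => i j.
by rewrite -(w_cyclic _ _ b).1 s0 // allpairs_f // mem_nth // size_tuple.
Qed.

Lemma tstar_abel_reduced : lie_reduced br <-> nondeg_w w.
Proof.
split=> [red b brad | nd x /tstar_abel_center xc].
  have /red/tstar_abel_derived[] // : lie_center br (b, 0).
  exact/tstar_abel_center.
by apply/tstar_abel_derived; split; [exact: nd | exact: nondeg_wE.1].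
Qed.

End TStarAbelian.

Theorem corollary2p23 (K : fieldType) (B : vectType K)
  (w : B -> B -> 'Hom(B, K^o)) :
  [pchar K] =i pred0 ->
  bilinear_map w -> cyclic_form w -> cocycle2 (@abel_br K B) w ->
  let L := (B * 'Hom(B, K^o))%type in
  let br := tstar_br (@abel_br K B) w in
  let W := fun beta : 'Hom(B, K^o) => exists b b', beta = w b b' in
  (forall x : L, lie_derived br x <-> x.1 = 0 /\ in_span W x.2) /\
  (forall x : L, lie_center br x <-> rad_w w x.1) /\
  (two_step_nilpotent br <-> exists b b', w b b' <> 0) /\
  ((lie_reduced br <-> nondeg_w w) /\
   (nondeg_w w <-> forall beta, in_span W beta)).
Proof.
move=> _ w_bilinear w_cyclic _ L br W.
split; first exact: tstar_abel_derived.
split; first exact: tstar_abel_center.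
split; first exact: tstar_abel_two_step.
split; [exact: tstar_abel_reduced | exact: nondeg_wE].
Qed.
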